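(* Let $q$ be a prime power and $n=q^4-1$. Let $x$ be the minimal representative of a cyclotomic coset $I_x$ of cardinality $2$ with $(q^4-1)/(q+1)<x<q^3+q$. Then $I_x$ is an SR-asymmetric coset. Furthermore, the interlude $[(q^4-1)/(q+1),\,q^3+q]_M=[(q-1,0,q-1,0),(0,1,0,1)]_M$ contains exactly $q^2-q$ minimal representatives of SR-asymmetric cosets.
   Context: Identify $\mathbb{Z}_n$ with $\{0,\ldots,n-1\}$, all arithmetic modulo $n$. The $q$-adic 4-tuple $(a_0,a_1,a_2,a_3)$ denotes $a_0+a_1q+a_2q^2+a_3q^3$ with $0\le a_i<q$. The cyclotomic coset of $x$ with respect to $q^2$ is $I_x=\{x,\,q^2x\bmod n\}$; its minimal representative is its least element. The (Hermitian) reciprocal coset of $I_x$ is $I_{n-qx}$. $I_x$ is symmetric if $I_{n-qx}=I_x$ and asymmetric otherwise; for an asymmetric pair with minimal representatives $x<y$, $I_x$ is FR-asymmetric and $I_y$ is SR-asymmetric. The interlude $[(q-1,0,q-1,0),(0,1,0,1)]_M$ is the set of integers $x$ with $(q-1,0,q-1,0)<x<(0,1,0,1)$ and $x<q^2x\bmod n$ (i.e. minimal representatives of cosets of cardinality $2$ in that range). *)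

From mathcomp Require Import all_boot.
Set Implicit Arguments. Unset Strict Implicit. Unset Printing Implicit Defensive.

Definition prime_power (q : nat) : Prop :=
  exists p k : nat, prime p /\ 0 < k /\ q = p ^ k.

Definition modn4 (q : nat) : nat := q ^ 4 - 1.

Definition qadic (q a0 a1 a2 a3 : nat) : nat :=
  a0 + a1 * q + a2 * q ^ 2 + a3 * q ^ 3.

(* cyclotomic coset I_x = {x, q^2 x mod n} (elements of Z_n as 0..n-1) *)
Definition coset (q x : nat) : seq nat :=
  undup [:: x %% modn4 q; (q ^ 2 * x) %% modn4 q].

Definition minrep (q x : nat) : nat :=
  minn (x %% modn4 q) ((q ^ 2 * x) %% modn4 q).

(* index of the reciprocal coset: I_{n - q x} (arithmetic mod n) *)
Definition recip (q x : nat) : nat :=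
  (modn4 q - (q * x) %% modn4 q) %% modn4 q.

Definition symmetric_coset (q x : nat) : bool :=
  perm_eq (coset q (recip q x)) (coset q x). (* equal as sets: both are duplicate-free *)

Definition SR_asymmetric (q x : nat) : bool :=
  ~~ symmetric_coset q x && (minrep q (recip q x) < minrep q x).

Definition in_interlude (q a b x : nat) : bool :=
  [&& a < x, x < b & x < (q ^ 2 * x) %% modn4 q].

From mathcomp Require Import all_boot zify.
Set Implicit Arguments. Unset Strict Implicit. Unset Printing Implicit Defensive.

(* With n = q^4 - 1 we have n / (q + 1) = q^3 - q^2 + q - 1.  Write x in the
   interlude as x = (q - 1) q^2 + r (q <= r < q^2) or x = q^3 + s (s < q).
   Since q^4 = 1 mod n, q^2 x mod n is r q^2 + q - 1 > x in the first case and
   s q^2 + q < x in the second, so the minimal representatives of 2-cosets in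
   the interlude are exactly the q^2 - q numbers q^3 - q^2 + q <= x < q^3.
   For those, q x < n and x (q + 1) > n, so the reciprocal coset contains
   n - q x < x: it has a smaller minimal representative, hence I_x is
   SR-asymmetric. *)

Section MinimalRepresentatives.

Variable q : nat.

Lemma minrep_in_coset y : minrep q y \in coset q y.
Proof.
by rewrite /minrep /coset mem_undup !inE /minn; case: ifP; rewrite eqxx ?orbT.
Qed.

Lemma minrep_le_coset y z : z \in coset q y -> minrep q y <= z.
Proof.
by rewrite /coset mem_undup !inE => /orP[] /eqP->; [exact: geq_minl | exact: geq_minr].
Qed.

Lemma minrep_le y : minrep q y <= y.
Proof. exact: leq_trans (geq_minl _ _) (leq_mod _ _). Qed.

Lemma perm_eq_coset_minrep y x :
  perm_eq (coset q y) (coset q x) -> minrep q y = minrep q x.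
Proof.
move=> /perm_mem eq_yx; apply/eqP; rewrite eqn_leq !minrep_le_coset //.
  by rewrite -eq_yx minrep_in_coset.
by rewrite eq_yx minrep_in_coset.
Qed.

Lemma SR_asymmetric_of_lt x :
  minrep q (recip q x) < minrep q x -> SR_asymmetric q x.
Proof.
move=> lt_rx; rewrite /SR_asymmetric lt_rx andbT.
by apply/negP => /perm_eq_coset_minrep eq_rx; rewrite eq_rx ltnn in lt_rx.
Qed.

Lemma minrep_id x :
  x < modn4 q -> x <= (q ^ 2 * x) %% modn4 q -> minrep q x = x.
Proof. by move=> x_lt_n x_le; rewrite /minrep modn_small //; apply/minn_idPl. Qed.

Lemma recipE x : 0 < q * x < modn4 q -> recip q x = modn4 q - q * x.
Proof. by case/andP=> qx_gt0 qx_lt_n; rewrite /recip modn_small // modn_small //; lia. Qed.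

End MinimalRepresentatives.

Lemma prime_power_gt1 q : prime_power q -> 1 < q.
Proof.
case=> p [[|k] [p_pr [k_gt0 ->]]] //.
by rewrite -(exp1n k.+1) ltn_exp2r // prime_gt1.
Qed.

Lemma modn4_div_succ q : modn4 q %/ (q + 1) = q ^ 3 - q ^ 2 + q - 1.
Proof.
have -> : modn4 q = (q ^ 3 - q ^ 2 + q - 1) * (q + 1) by rewrite /modn4; nia.
by rewrite mulnK // addn1.
Qed.

Section Interlude.

Variable q : nat.
Hypothesis q_gt1 : 1 < q.

Lemma modn4_mul_low x : q ^ 3 - q ^ 2 <= x < q ^ 3 ->
  (q ^ 2 * x) %% modn4 q = (x - (q ^ 3 - q ^ 2)) * q ^ 2 + (q - 1).
Proof.
case/andP=> lo hi; rewrite /modn4.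
have -> : q ^ 2 * x = (q - 1) * (q ^ 4 - 1) + ((x - (q ^ 3 - q ^ 2)) * q ^ 2 + (q - 1)).
  by nia.
by rewrite modnMDl modn_small //; nia.
Qed.

Lemma modn4_mul_high x : q ^ 3 <= x < q ^ 3 + q ->
  (q ^ 2 * x) %% modn4 q = (x - q ^ 3) * q ^ 2 + q.
Proof.
case/andP=> lo hi; rewrite /modn4.
have -> : q ^ 2 * x = q * (q ^ 4 - 1) + ((x - q ^ 3) * q ^ 2 + q) by nia.
by rewrite modnMDl modn_small //; nia.
Qed.

Lemma lt_modn4_mul_interlude x : q ^ 3 - q ^ 2 + q - 1 < x < q ^ 3 + q ->
  (x < (q ^ 2 * x) %% modn4 q) = (x < q ^ 3).
Proof.
case/andP=> lo hi; case: (ltnP x (q ^ 3)) => x_q3.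
  by rewrite modn4_mul_low; [nia | apply/andP; split=> //; lia].
by rewrite modn4_mul_high; [nia | apply/andP].
Qed.

Lemma SR_asymmetric_interlude x :
  modn4 q %/ (q + 1) < x -> x < q ^ 3 -> SR_asymmetric q x.
Proof.
move=> lo hi; have n_lt_x : modn4 q < x * (q + 1) by rewrite -ltn_divLR // addn1.
move: lo; rewrite modn4_div_succ => lo.
have x_lt_n : x < modn4 q by rewrite /modn4; nia.
have x_le : x <= (q ^ 2 * x) %% modn4 q.
  by apply: ltnW; rewrite lt_modn4_mul_interlude //; lia.
apply: SR_asymmetric_of_lt; rewrite [minrep q x]minrep_id //.
apply: leq_ltn_trans (minrep_le q _) _.
by rewrite recipE; rewrite /modn4 in n_lt_x *; nia.
Qed.

Lemma in_interlude_SR_asymmetricE x : x < q ^ 3 + q ->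
  in_interlude q (modn4 q %/ (q + 1)) (q ^ 3 + q) x && SR_asymmetric q x
  = (q ^ 3 - q ^ 2 + q <= x < q ^ 3).
Proof.
move=> hi; rewrite /in_interlude hi modn4_div_succ /=.
case: (ltnP (q ^ 3 - q ^ 2 + q - 1) x) => lo /=; last by lia.
rewrite lt_modn4_mul_interlude ?lo ?hi //.
case: (ltnP x (q ^ 3)) => x_q3 /=; last by lia.
by rewrite SR_asymmetric_interlude ?modn4_div_succ //; lia.
Qed.

End Interlude.

Lemma count_itv_iota0 lo hi m : lo <= hi ->
  count (fun x => lo <= x < hi) (iota 0 m) = minn m hi - minn m lo.
Proof.
move=> lo_hi; elim: m => [|m IHm]; first by rewrite !min0n.
rewrite -addn1 iotaD count_cat IHm /= add0n addn0.
by case: (leqP lo m) => ?; case: (ltnP m hi) => ? /=; lia.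
Qed.

Lemma card_ord_itv m lo hi (P : pred nat) : lo <= hi <= m ->
  (forall x, x < m -> P x = (lo <= x < hi)) -> #|[set x : 'I_m | P x]| = hi - lo.
Proof.
case/andP=> lo_hi hi_m eqP_itv; rewrite -sum1_card.
rewrite (eq_bigl (fun i : 'I_m => lo <= i < hi)) => [|i]; last by rewrite inE eqP_itv.
rewrite -(big_mkord (fun i => lo <= i < hi) (fun=> 1)) /index_iota subn0 sum1_count.
by rewrite count_itv_iota0 //; lia.
Qed.

Theorem mainTheorem14 (q : nat) (hq : prime_power q) :
  (forall x : nat,
      (modn4 q) %/ (q + 1) < x -> x < q ^ 3 + q ->
      x < (q ^ 2 * x) %% modn4 q ->
      SR_asymmetric q x)
  /\ (modn4 q) %/ (q + 1) = qadic q (q - 1) 0 (q - 1) 0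
  /\ q ^ 3 + q = qadic q 0 1 0 1
  /\ #|[set x : 'I_(q ^ 3 + q) |
         in_interlude q (qadic q (q - 1) 0 (q - 1) 0) (qadic q 0 1 0 1) x
         && SR_asymmetric q x]| = q ^ 2 - q.
Proof.
have q_gt1 := prime_power_gt1 hq.
have lo_qadic : modn4 q %/ (q + 1) = qadic q (q - 1) 0 (q - 1) 0.
  by rewrite modn4_div_succ /qadic; nia.
have hi_qadic : q ^ 3 + q = qadic q 0 1 0 1 by rewrite /qadic; nia.
split; [|split=> //; split=> //].
  move=> x lo hi x_lt; apply: SR_asymmetric_interlude => //.
  by rewrite -(lt_modn4_mul_interlude q_gt1) // -modn4_div_succ lo.
rewrite -lo_qadic -hi_qadic (_ : q ^ 2 - q = q ^ 3 - (q ^ 3 - q ^ 2 + q)); last by nia.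
apply: (card_ord_itv (P := fun x => in_interlude q (modn4 q %/ (q + 1)) (q ^ 3 + q) x
                                   && SR_asymmetric q x)) => [|x]; first by nia.
exact: in_interlude_SR_asymmetricE.
Qed.
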